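(* Let $T:\mathbb{Z}_{\ge 0}\to\mathbb{R}$ be a sequence of real numbers. Then $T$ satisfies $$T(mn) = T(m)T(n) + T(m-1)T(n-1) \quad\text{for all integers } m,n\ge 1$$ if and only if $T$ is one of the following five sequences: (1) $T(n)=0$ for all $n\ge 0$; (2) $T(n)=\tfrac12$ for all $n\ge 0$; (3) $T(0)=0$ and $T(2n)=T(2n-1)=n$ for all $n\ge 1$; (4) $T(3n)=T(3n+2)=0$ and $T(3n+1)=1$ for all $n\ge 0$; (5) $T(n)=\tfrac12 n(n+1)$ for all $n\ge 0$. *)

From Stdlib Require Export Reals.
Open Scope R_scope.

Definition satisfies_eq (T : nat -> R) : Prop :=
  forall m n : nat, (1 <= m)%nat -> (1 <= n)%nat ->
    T (m * n)%nat = T m * T n + T (m - 1)%nat * T (n - 1)%nat.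

(* Putting m = 1 gives T(n+1) (1 - T 1) = T 0 T n.  If T 1 <> 1 the sequence is
   therefore geometric, and the cases m = n = 1 and m = n = 2 force it to be 0 or 1/2.
   If T 1 = 1 then T 0 = 0, and m = 2 and m = 4 yield recurrences computing T(2n) and
   T(2n-1) from smaller values, so T is determined by t = T 2 and u = T 3 - T 2.
   Computing T 9, T 15 and T 18 in two ways gives three polynomial equations in
   (t, u) whose only real solutions are (0,0), (1,1) and (3,3); these are realized
   by the sequences (4), (3) and (5). *)

From Stdlib Require Import Reals Lra Lia.
Open Scope R_scope.

Definition ceil_half (n : nat) : R := INR (Nat.div2 (S n)).
Definition mod3_indicator (n : nat) : R := if Nat.eqb (n mod 3) 1 then 1 else 0.
Definition triangular (n : nat) : R := 1 / 2 * INR n * (INR n + 1).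

Lemma ceil_half_double k : ceil_half (2 * k) = INR k.
Proof. unfold ceil_half. now rewrite Nat.div2_succ_double. Qed.

Lemma ceil_half_S_double k : ceil_half (S (2 * k)) = INR k + 1.
Proof.
  unfold ceil_half. replace (S (S (2 * k))) with (2 * S k)%nat by lia.
  now rewrite Nat.div2_double, S_INR.
Qed.

Lemma ceil_half_satisfies_eq : satisfies_eq ceil_half.
Proof.
  intros m n Hm Hn.
  destruct m as [|m]; [lia|]; destruct n as [|n]; [lia|].
  rewrite !Nat.sub_succ, !Nat.sub_0_r.
  destruct (Nat.Even_or_Odd m) as [[a ->]|[a ->]];
  destruct (Nat.Even_or_Odd n) as [[b ->]|[b ->]].
  - replace (S (2 * a) * S (2 * b))%nat with (S (2 * (2 * a * b + a + b))) by lia.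
    rewrite !ceil_half_S_double, !ceil_half_double, !plus_INR, !mult_INR; simpl; ring.
  - replace (S (2 * a) * S (2 * b + 1))%nat with (2 * (S (2 * a) * S b))%nat by lia.
    replace (S (2 * b + 1)) with (2 * S b)%nat by lia.
    replace (2 * b + 1)%nat with (S (2 * b)) by lia.
    rewrite !ceil_half_S_double, !ceil_half_double, !mult_INR, !S_INR, !mult_INR; simpl; ring.
  - replace (S (2 * a + 1) * S (2 * b))%nat with (2 * (S a * S (2 * b)))%nat by lia.
    replace (S (2 * a + 1)) with (2 * S a)%nat by lia.
    replace (2 * a + 1)%nat with (S (2 * a)) by lia.
    rewrite !ceil_half_S_double, !ceil_half_double, !mult_INR, !S_INR, !mult_INR; simpl; ring.
  - replace (S (2 * a + 1) * S (2 * b + 1))%nat with (2 * (2 * S a * S b))%nat by lia.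
    replace (S (2 * a + 1)) with (2 * S a)%nat by lia.
    replace (S (2 * b + 1)) with (2 * S b)%nat by lia.
    replace (2 * a + 1)%nat with (S (2 * a)) by lia.
    replace (2 * b + 1)%nat with (S (2 * b)) by lia.
    rewrite !ceil_half_S_double, !ceil_half_double, !mult_INR, !S_INR; simpl; ring.
Qed.

Lemma mod3_indicator_mod n : mod3_indicator (n mod 3) = mod3_indicator n.
Proof. unfold mod3_indicator. now rewrite Nat.Div0.mod_mod. Qed.

Lemma mod3_indicator_mul m n :
  mod3_indicator (m * n) = mod3_indicator (m mod 3 * (n mod 3)).
Proof. unfold mod3_indicator. now rewrite Nat.Div0.mul_mod. Qed.

Lemma mod3_indicator_pred m : (1 <= m)%nat ->
  mod3_indicator (m - 1) = mod3_indicator (m mod 3 + 2).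
Proof.
  intro Hm. unfold mod3_indicator.
  rewrite Nat.Div0.add_mod_idemp_l, <- (Nat.Div0.mod_add (m - 1) 1 3).
  now replace (m - 1 + 1 * 3)%nat with (m + 2)%nat by lia.
Qed.

Lemma mod3_indicator_satisfies_eq : satisfies_eq mod3_indicator.
Proof.
  intros m n Hm Hn.
  rewrite mod3_indicator_mul, !mod3_indicator_pred, <- (mod3_indicator_mod m),
    <- (mod3_indicator_mod n) by assumption.
  pose proof (Nat.mod_upper_bound m 3 ltac:(lia)).
  pose proof (Nat.mod_upper_bound n 3 ltac:(lia)).
  destruct (m mod 3) as [|[|[|]]], (n mod 3) as [|[|[|]]]; try lia;
    unfold mod3_indicator; simpl; ring.
Qed.

Lemma triangular_satisfies_eq : satisfies_eq triangular.
Proof.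
  intros m n Hm Hn. unfold triangular.
  rewrite mult_INR, !minus_INR by lia. simpl. field.
Qed.

Section NormalizedSolutions.

Variable T : nat -> R.
Hypothesis HT : satisfies_eq T.
Hypothesis T1 : T 1%nat = 1.

Lemma satisfies_eq_T0 : T 0%nat = 0.
Proof. pose proof (HT 1%nat 1%nat ltac:(lia) ltac:(lia)) as E. simpl in E. nra. Qed.

Lemma satisfies_eq_double n : (1 <= n)%nat ->
  T (2 * n)%nat = T 2%nat * T n + T (n - 1)%nat.
Proof. intro Hn. rewrite (HT 2%nat n) by lia. simpl. rewrite T1. ring. Qed.

(* Expand T(4n) both as T(4)T(n) + T(3)T(n-1) and via two doublings. *)
Lemma satisfies_eq_double_pred n : (1 <= n)%nat ->
  T (2 * n - 1)%nat = T n + (T 3%nat - T 2%nat) * T (n - 1)%nat.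
Proof.
  intro Hn.
  pose proof (HT 4%nat n ltac:(lia) Hn) as E4n.
  pose proof (satisfies_eq_double (2 * n) ltac:(lia)) as E2n.
  pose proof (HT 2%nat 2%nat ltac:(lia) ltac:(lia)) as E4. simpl in E4.
  replace (4 - 1)%nat with 3%nat in E4n by reflexivity.
  replace (2 * (2 * n))%nat with (4 * n)%nat in E2n by lia.
  rewrite satisfies_eq_double in E2n by assumption.
  rewrite T1, Rmult_1_r in E4. rewrite E2n, E4 in E4n. lra.
Qed.

Lemma satisfies_eq_params :
  let t := T 2%nat in let u := T 3%nat - T 2%nat in
  2*t^2 + 2*t*u + u^2 - t - 2*u - u*t - u*t^2 = 0 /\
  t^2 + 2*t*u + u^2 - t - 2*u - u^3 = 0 /\
  2*t^2*u + t*u^2 + t^2 - u*t^3 - 2*t - u = 0.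
Proof.
  pose proof (HT 2%nat 2%nat ltac:(lia) ltac:(lia)) as V4. simpl in V4.
  pose proof (satisfies_eq_double_pred 3 ltac:(lia)) as V5. simpl in V5.
  pose proof (satisfies_eq_double 3 ltac:(lia)) as V6. simpl in V6.
  pose proof (satisfies_eq_double_pred 4 ltac:(lia)) as V7. simpl in V7.
  pose proof (satisfies_eq_double 4 ltac:(lia)) as V8. simpl in V8.
  pose proof (satisfies_eq_double_pred 5 ltac:(lia)) as V9. simpl in V9.
  pose proof (HT 3%nat 3%nat ltac:(lia) ltac:(lia)) as W9. simpl in W9.
  pose proof (HT 3%nat 5%nat ltac:(lia) ltac:(lia)) as W15. simpl in W15.
  pose proof (satisfies_eq_double_pred 8 ltac:(lia)) as V15. simpl in V15.
  pose proof (HT 3%nat 6%nat ltac:(lia) ltac:(lia)) as W18. simpl in W18.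
  pose proof (satisfies_eq_double 9 ltac:(lia)) as V18. simpl in V18.
  rewrite T1 in V4.
  rewrite V4 in V7, V8, V9, W15. rewrite V5 in V9, W15, W18. rewrite V9 in W9, V18.
  rewrite V7, V8 in V15. rewrite V8 in V18. rewrite V6 in W18.
  rewrite W15 in V15. rewrite W18 in V18.
  intros t u. unfold t, u. split; [|split]; nra.
Qed.

End NormalizedSolutions.

Lemma satisfies_eq_unique (T U : nat -> R) :
  satisfies_eq T -> satisfies_eq U -> T 1%nat = 1 -> U 1%nat = 1 ->
  T 2%nat = U 2%nat -> T 3%nat = U 3%nat -> forall n, T n = U n.
Proof.
  intros HT HU T1 U1 E2 E3 n.
  induction n as [n IH] using Wf_nat.lt_wf_ind.
  destruct (Nat.Even_or_Odd n) as [[k ->]|[k ->]].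
  - destruct k as [|k].
    + simpl. now rewrite (satisfies_eq_T0 T HT T1), (satisfies_eq_T0 U HU U1).
    + rewrite (satisfies_eq_double T HT T1), (satisfies_eq_double U HU U1), E2, !IH by lia.
      reflexivity.
  - destruct k as [|k].
    + simpl. now rewrite T1, U1.
    + replace (2 * S k + 1)%nat with (2 * S (S k) - 1)%nat by lia.
      rewrite (satisfies_eq_double_pred T HT T1), (satisfies_eq_double_pred U HU U1),
        E2, E3, !IH by lia.
      reflexivity.
Qed.

Lemma satisfies_eq_T1_neq_1 (T : nat -> R) : satisfies_eq T -> T 1%nat <> 1 ->
  (forall n, T n = 0) \/ (forall n, T n = 1 / 2).
Proof.
  intros HT Hb. set (a := T 0%nat).
  assert (Hb' : 1 - T 1%nat <> 0) by (intro; apply Hb; lra).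
  assert (Hrec : forall n, T (S n) = a / (1 - T 1%nat) * T n).
  { intro n. pose proof (HT 1%nat (S n) ltac:(lia) ltac:(lia)) as E.
    rewrite Nat.mul_1_l in E. simpl in E. rewrite Nat.sub_0_r in E.
    assert (E' : T (S n) * (1 - T 1%nat) = a * T n) by (unfold a; lra).
    replace (a / (1 - T 1%nat) * T n) with (a * T n / (1 - T 1%nat)) by (field; exact Hb').
    rewrite <- E'. field. exact Hb'. }
  set (c := a / (1 - T 1%nat)) in Hrec.
  assert (Hgeom : forall n, T n = a * c ^ n).
  { induction n as [|n IH]; [simpl; unfold a; ring|]. rewrite Hrec, IH. simpl. ring. }
  destruct (Req_dec a 0) as [Ha|Ha].
  { left. intro n. rewrite Hgeom, Ha. ring. }
  right.
  pose proof (HT 1%nat 1%nat ltac:(lia) ltac:(lia)) as E2. simpl in E2.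
  pose proof (HT 2%nat 2%nat ltac:(lia) ltac:(lia)) as E4. simpl in E4.
  rewrite !Hgeom in E2. rewrite !Hgeom in E4.
  assert (Hc : c = a * c ^ 2 + a).
  { apply (Rmult_eq_reg_l a); [|exact Ha]. simpl in E2 |- *. lra. }
  assert (Hc0 : c <> 0) by (intro Z; rewrite Z in Hc; simpl in Hc; lra).
  assert (Hc4 : c ^ 4 = c ^ 2 * (a * c ^ 2 + a)).
  { apply (Rmult_eq_reg_l a); [|exact Ha]. simpl in E4 |- *. lra. }
  assert (Hc1 : c = 1).
  { rewrite <- Hc in Hc4.
    assert (X : c ^ 3 * (c - 1) = 0)
      by (replace (c ^ 3 * (c - 1)) with (c ^ 4 - c ^ 2 * c) by ring; lra).
    apply Rmult_integral in X as [X|X]; [|lra].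
    exfalso. exact (pow_nonzero c 3 Hc0 X). }
  intro n. rewrite Hgeom, Hc1, pow1. rewrite Hc1 in Hc. lra.
Qed.

Lemma normalized_params_cases (t u : R) :
  2*t^2 + 2*t*u + u^2 - t - 2*u - u*t - u*t^2 = 0 ->
  t^2 + 2*t*u + u^2 - t - 2*u - u^3 = 0 ->
  2*t^2*u + t*u^2 + t^2 - u*t^3 - 2*t - u = 0 ->
  (t = 0 /\ u = 0) \/ (t = 1 /\ u = 1) \/ (t = 3 /\ u = 3).
Proof.
  intros HA HB HE.
  assert (HAB : (t - u) * (t - u*t - u^2) = 0) by lra.
  apply Rmult_integral in HAB as [Htu|Ht].
  - assert (t = u) by lra. subst u.
    assert (X : t * ((t - 1) * (t - 3)) = 0) by lra.
    apply Rmult_integral in X as [X|X]; [left; lra|].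
    apply Rmult_integral in X as [X|X]; right; [left|right]; lra.
  - left.
    assert (Hu1 : 1 - u <> 0) by (intro; assert (u = 1) by lra; subst; lra).
    destruct (Req_dec u 0) as [Hu0|Hu0]; [subst; lra|].
    exfalso.
    assert (Ht' : t = u^2 / (1 - u)) by (field_simplify_eq; lra).
    assert (Hq : u^4 - 2*u^3 + 2*u^2 - 4*u + 2 = 0).
    { apply (Rmult_eq_reg_l u); [|exact Hu0].
      transitivity (- (1 - u)^2 * (t^2 + 2*t*u + u^2 - t - 2*u - u^3)).
      - rewrite Ht'. field. exact Hu1.
      - rewrite HB. ring. }
    assert (Hr : -1 + u + u^2 + u^3 - u^4 - u^5 - u^6 = 0).
    { apply (Rmult_eq_reg_l u); [|exact Hu0].
      transitivity ((1 - u)^3 * (2*t^2*u + t*u^2 + t^2 - u*t^3 - 2*t - u)).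
      - rewrite Ht'. field. exact Hu1.
      - rewrite HE. ring. }
    (* A Bezout identity: the two polynomials in u have no common root. *)
    assert (K : (-268 - 148*u + 32*u^2 + 337*u^3 + 276*u^4 + 174*u^5) *
                (u^4 - 2*u^3 + 2*u^2 - 4*u + 2) +
                (-571 + 205*u - 246*u^2 + 174*u^3) *
                (-1 + u + u^2 + u^3 - u^4 - u^5 - u^6) = 35) by ring.
    rewrite Hq, Hr in K. lra.
Qed.

Lemma satisfies_eq_T1_eq_1 (T : nat -> R) : satisfies_eq T -> T 1%nat = 1 ->
  (forall n, T n = ceil_half n) \/ (forall n, T n = mod3_indicator n) \/
  (forall n, T n = triangular n).
Proof.
  intros HT T1.
  destruct (satisfies_eq_params T HT T1) as (PA & PB & PE).
  destruct (normalized_params_cases _ _ PA PB PE) as [[Ht Hu]|[[Ht Hu]|[Ht Hu]]].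
  - right; left. apply satisfies_eq_unique; auto using mod3_indicator_satisfies_eq;
      unfold mod3_indicator; simpl; lra.
  - left. apply satisfies_eq_unique; auto using ceil_half_satisfies_eq;
      unfold ceil_half; simpl; lra.
  - right; right. apply satisfies_eq_unique; auto using triangular_satisfies_eq;
      unfold triangular; simpl; lra.
Qed.

Lemma ceil_half_iff (T : nat -> R) :
  (T 0%nat = 0 /\ forall n : nat, (1 <= n)%nat ->
     T (2 * n)%nat = INR n /\ T (2 * n - 1)%nat = INR n) <->
  (forall n, T n = ceil_half n).
Proof.
  split.
  - intros [T0 Heven] n.
    destruct (Nat.Even_or_Odd n) as [[k ->]|[k ->]].
    + rewrite ceil_half_double. destruct k as [|k]; [exact T0|].
      exact (proj1 (Heven (S k) ltac:(lia))).
    + replace (2 * k + 1)%nat with (2 * S k - 1)%nat by lia.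
      rewrite (proj2 (Heven (S k) ltac:(lia))), S_INR.
      replace (2 * S k - 1)%nat with (S (2 * k)) by lia.
      now rewrite ceil_half_S_double.
  - intro E. split; [rewrite E; reflexivity|]. intros n Hn.
    rewrite !E, ceil_half_double.
    replace (2 * n - 1)%nat with (S (2 * (n - 1))) by lia.
    rewrite ceil_half_S_double, minus_INR by lia. simpl. split; ring.
Qed.

Lemma mod3_indicator_add_mul3 k r : mod3_indicator (3 * k + r) = mod3_indicator r.
Proof.
  rewrite <- mod3_indicator_mod, <- (mod3_indicator_mod r).
  now rewrite Nat.mul_comm, Nat.add_comm, Nat.Div0.mod_add.
Qed.

Lemma mod3_indicator_iff (T : nat -> R) :
  (forall n : nat, T (3 * n)%nat = 0 /\ T (3 * n + 2)%nat = 0 /\ T (3 * n + 1)%nat = 1) <->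
  (forall n, T n = mod3_indicator n).
Proof.
  split.
  - intros H n.
    rewrite (Nat.div_mod_eq n 3), mod3_indicator_add_mul3.
    pose proof (Nat.mod_upper_bound n 3 ltac:(lia)).
    destruct (n mod 3) as [|[|[|]]]; try lia; unfold mod3_indicator; simpl;
      [rewrite Nat.add_0_r|..]; apply H.
  - intros E n. rewrite !E, !mod3_indicator_add_mul3, <- (Nat.add_0_r (3 * n)),
      mod3_indicator_add_mul3.
    unfold mod3_indicator; simpl; lra.
Qed.

Theorem theorem1 (T : nat -> R) :
  satisfies_eq T <->
  ((forall n : nat, T n = 0) \/
   (forall n : nat, T n = 1 / 2) \/
   (T 0%nat = 0 /\ forall n : nat, (1 <= n)%nat ->
      T (2 * n)%nat = INR n /\ T (2 * n - 1)%nat = INR n) \/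
   (forall n : nat, T (3 * n)%nat = 0 /\ T (3 * n + 2)%nat = 0 /\ T (3 * n + 1)%nat = 1) \/
   (forall n : nat, T n = 1 / 2 * INR n * (INR n + 1))).
Proof.
  rewrite ceil_half_iff, mod3_indicator_iff. split.
  - intro HT. destruct (Req_dec (T 1%nat) 1) as [T1|T1].
    + destruct (satisfies_eq_T1_eq_1 T HT T1) as [E|[E|E]]; tauto.
    + destruct (satisfies_eq_T1_neq_1 T HT T1) as [E|E]; tauto.
  - intros [E|[E|[E|[E|E]]]] m n Hm Hn; rewrite !E.
    + ring.
    + field.
    + exact (ceil_half_satisfies_eq m n Hm Hn).
    + exact (mod3_indicator_satisfies_eq m n Hm Hn).
    + exact (triangular_satisfies_eq m n Hm Hn).
Qed.
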